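(* Fix $\hat P_0\in\mathbb S^n_+$. Let $\mathcal C(\hat P_0)$ be the set of all matrices $\hat P_i$, $i\in\mathbb Z_+$, generated by the inexact value iteration $\hat P_{i+1}=\mathcal R(\hat P_i,S)+\Delta_i$ started from $\hat P_0$, over all disturbance sequences $\{\Delta_i\}_{i\ge0}\subset\mathbb S^n$ with $\sup_{i}\|\Delta_i\|_2<\lambda_{\min}(S)$. Then the closure $\overline{\mathcal C(\hat P_0)}$ is compact.
   Context: Let $n,m\ge 1$, $A\in\mathbb R^{n\times n}$, $B\in\mathbb R^{n\times m}$, $S\in\mathbb S^n_{++}$, $R\in\mathbb S^m_{++}$, with $(A,B)$ stabilizable. Here $\mathbb S^n$, $\mathbb S^n_+$, $\mathbb S^n_{++}$ denote the real symmetric, symmetric positive semidefinite, and symmetric positive definite $n\times n$ matrices; $\|\cdot\|_2$ is the spectral norm; $\lambda_{\min}$ is the smallest eigenvalue. For $P\in\mathbb S^n_+$ and $S'\in\mathbb S^n$, the Riccati operator is $\mathcal R(P,S')=A^\top PA-A^\top PB(R+B^\top PB)^{-1}B^\top PA+S'$. *)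

From HB Require Import structures.
From mathcomp Require Import all_boot all_order all_algebra.
From mathcomp Require Import all_classical all_reals all_analysis.
From mathcomp Require Import complex.
Set Implicit Arguments. Unset Strict Implicit. Unset Printing Implicit Defensive.
Import Order.TTheory GRing.Theory Num.Theory.
Import numFieldNormedType.Exports.
Local Open Scope ring_scope.
Local Open Scope classical_set_scope.

Section Defs.
Variable R : realType.

Definition symmetric n (P : 'M[R]_n) : Prop := P^T = P.
Definition psd n (P : 'M[R]_n) : Prop :=
  symmetric P /\ forall x : 'cV[R]_n, 0 <= (x^T *m P *m x) 0 0.
Definition pd n (P : 'M[R]_n) : Prop :=
  symmetric P /\ forall x : 'cV[R]_n, x != 0 -> 0 < (x^T *m P *m x) 0 0.

Definition spec_norm n (M : 'M[R]_n) : R :=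
  sup [set Num.sqrt (((M *m x)^T *m (M *m x)) 0 0) |
        x in [set x : 'cV[R]_n | (x^T *m x) 0 0 = 1]].

Definition lambda_min n (M : 'M[R]_n) : R :=
  inf [set a : R | eigenvalue M a].

Definition schur_stable n (M : 'M[R]_n) : Prop :=
  forall z : R[i],
    root (map_poly (fun x : R => (x%:C)%C) (char_poly M)) z -> `|z| < 1.

Definition stabilizable n m (A : 'M[R]_n) (B : 'M[R]_(n, m)) : Prop :=
  exists K : 'M[R]_(m, n), schur_stable (A + B *m K).

Definition riccati n m (A : 'M[R]_n) (B : 'M[R]_(n, m)) (Rm : 'M[R]_m)
  (P S' : 'M[R]_n) : 'M[R]_n :=
  A^T *m P *m A
  - A^T *m P *m B *m invmx (Rm + B^T *m P *m B) *m B^T *m P *m A + S'.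

Fixpoint inexact_vi n m (A : 'M[R]_n) (B : 'M[R]_(n, m)) (Rm : 'M[R]_m)
  (S P0 : 'M[R]_n) (Delta : nat -> 'M[R]_n) (i : nat) : 'M[R]_n :=
  match i with
  | 0 => P0
  | i'.+1 => riccati A B Rm (inexact_vi A B Rm S P0 Delta i') S + Delta i'
  end.

(* C(P0): all iterates over all admissible disturbance sequences;
   "sup_i ||Delta_i||_2 < lambda_min S" written as: some c < lambda_min S
   bounds every ||Delta_i||_2 *)
Definition reach_set n m (A : 'M[R]_n) (B : 'M[R]_(n, m)) (Rm : 'M[R]_m)
  (S P0 : 'M[R]_n) : set 'M[R]_n :=
  [set P | exists (Delta : nat -> 'M[R]_n) (i : nat),
     (forall k, symmetric (Delta k)) /\
     (exists c : R, c < lambda_min S /\ forall k, spec_norm (Delta k) <= c) /\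
     P = inexact_vi A B Rm S P0 Delta i].

End Defs.

From Pilot Require Import Defs.
From HB Require Import structures.
From mathcomp Require Import all_boot all_order all_algebra.
From mathcomp Require Import all_classical all_reals all_analysis.
From mathcomp Require Import complex.
Import Order.TTheory GRing.Theory Num.Theory.
Import numFieldNormedType.Exports.
Local Open Scope ring_scope.
Local Open Scope classical_set_scope.

From mathcomp Require Import ring lra.
Set Implicit Arguments. Unset Strict Implicit. Unset Printing Implicit Defensive.

(* Every iterate is positive semidefinite: the Riccati map adds at least [S],
   and a disturbance of spectral norm below [lambda_min S] cannot undo that.
   Conversely, for a stabilizing gain [K] the Riccati map is dominated by the
   closed-loop Lyapunov map [P |-> N^T P N + K^T Rm K + S] with [N = A + B K],
   so [x^T P_i x] is bounded by quadratic forms along the trajectory [N^j x].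
   As [N] is Schur stable, the entries of its powers are absolutely summable,
   which bounds the diagonals of all iterates uniformly in [i] and in the
   disturbances; positive semidefiniteness bounds the other entries, and a
   bounded set of matrices has compact closure. *)

Section QuadraticForm.
Variable R : comNzRingType.

Definition qform n (P : 'M[R]_n) (x : 'cV[R]_n) : R := (x^T *m P *m x) 0 0.

Definition dot n (x y : 'cV[R]_n) : R := (x^T *m y) 0 0.

Lemma dotE n (x y : 'cV[R]_n) : dot x y = \sum_i x i 0 * y i 0.
Proof. by rewrite /dot mxE; apply: eq_bigr => i _; rewrite mxE. Qed.

Lemma trmx11 (a : 'M[R]_1) : a^T = a.
Proof. by apply/matrixP => i j; rewrite !ord1 mxE. Qed.

Lemma dotC n (x y : 'cV[R]_n) : dot x y = dot y x.
Proof. by rewrite /dot -[x^T *m y]trmx11 trmx_mul trmxK. Qed.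

Lemma bilin_sym n (P : 'M[R]_n) (u v : 'cV[R]_n) :
  P^T = P -> (u^T *m P *m v) 0 0 = (v^T *m P *m u) 0 0.
Proof.
by move=> sP; rewrite -[u^T *m P *m v]trmx11 !trmx_mul trmxK sP mulmxA.
Qed.

Lemma qformE n (P : 'M[R]_n) x :
  qform P x = \sum_a \sum_b x a 0 * P a b * x b 0.
Proof.
rewrite /qform mxE exchange_big /=; apply: eq_bigr => b _.
by rewrite mxE mulr_suml; apply: eq_bigr => a _; rewrite mxE.
Qed.

Lemma qform0 n (P : 'M[R]_n) : qform P 0 = 0.
Proof. by rewrite /qform mulmx0 mxE. Qed.

Lemma qformDl n (P Q : 'M[R]_n) x : qform (P + Q) x = qform P x + qform Q x.
Proof. by rewrite /qform mulmxDr mulmxDl mxE. Qed.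

Lemma qformN n (P : 'M[R]_n) x : qform (- P) x = - qform P x.
Proof. by rewrite /qform mulmxN mulNmx mxE. Qed.

Lemma qformDr n (P : 'M[R]_n) (u v : 'cV[R]_n) :
  qform P (u + v) =
  qform P u + qform P v + (u^T *m P *m v) 0 0 + (v^T *m P *m u) 0 0.
Proof.
rewrite /qform [(u + v)^T]linearD /= !mulmxDl !mulmxDr !mxE; ring.
Qed.

Lemma qform_scalar n (a : R) (x : 'cV[R]_n) : qform a%:M x = a * dot x x.
Proof. by rewrite /qform /dot mul_mx_scalar -scalemxAl mxE. Qed.

Lemma qform_mulmx n m (P : 'M[R]_n) (B : 'M[R]_(n, m)) z :
  qform (B^T *m P *m B) z = qform P (B *m z).
Proof. by rewrite /qform trmx_mul !mulmxA. Qed.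

Lemma bilin_delta n (P : 'M[R]_n) a b :
  ((delta_mx a 0 : 'cV[R]_n)^T *m P *m (delta_mx b 0 : 'cV[R]_n)) 0 0 = P a b.
Proof. by rewrite trmx_delta -rowE -colE !mxE. Qed.

Lemma qform_delta n (P : 'M[R]_n) a : qform P (delta_mx a 0) = P a a.
Proof. exact: bilin_delta. Qed.

End QuadraticForm.

Lemma qform_complete_square (R : comUnitRingType) n m (P : 'M[R]_n)
    (Rm : 'M[R]_m) (B : 'M[R]_(n, m)) (y : 'cV[R]_n) (v : 'cV[R]_m) :
  P^T = P -> Rm^T = Rm -> (Rm + B^T *m P *m B) \in unitmx ->
  let G := Rm + B^T *m P *m B in
  let w := B^T *m P *m y in
  qform P (y + B *m v) + qform Rm v =
  qform P y - (w^T *m invmx G *m w) 0 0 + qform G (v + invmx G *m w).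
Proof.
move=> sP sR uG G w.
have sGi : (invmx G)^T = invmx G.
  by rewrite trmx_inv /G linearD /= !trmx_mul trmxK sP sR mulmxA.
have wv : (w^T *m v) 0 0 = (y^T *m P *m (B *m v)) 0 0.
  by rewrite /w !trmx_mul trmxK sP !mulmxA.
have GGi : qform G (invmx G *m w) = (w^T *m invmx G *m w) 0 0.
  by rewrite /qform trmx_mul sGi mulmxA mulmxK.
have vGiw : (v^T *m G *m (invmx G *m w)) = v^T *m w.
  by rewrite mulmxA mulmxK.
have wGiv : ((invmx G *m w)^T *m G *m v) = w^T *m v.
  by rewrite trmx_mul sGi mulmxKV.
rewrite !qformDr GGi vGiw wGiv /G qformDl qform_mulmx /qform.
rewrite -!/(dot _ _) [dot v w]dotC /dot wv (bilin_sym _ _ sP); ring.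
Qed.

Lemma pd_qform_ge0 (R : realType) k (P : 'M[R]_k) :
  pd P -> forall z, 0 <= qform P z.
Proof.
move=> hP z; have [->|z0] := eqVneq z 0; first by rewrite qform0.
exact/ltW/hP.2.
Qed.

Lemma unitmx_of_qform_gt0 (R : numFieldType) k (G : 'M[R]_k) :
  (forall z, z != 0 -> 0 < qform G z) -> G \in unitmx.
Proof.
move=> hG; rewrite unitmxE unitfE; apply/negP => /det0P [u u0 uG].
have := hG u^T; rewrite trmx_eq0 => /(_ u0).
by rewrite /qform trmxK uG mul0mx mxE ltxx.
Qed.

Section Riccati.
Variables (R : realType) (n m : nat).
Variables (A : 'M[R]_n) (B : 'M[R]_(n, m)) (Rm : 'M[R]_m).

Lemma riccati_gain_unitmx (P : 'M[R]_n) :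
  psd P -> pd Rm -> (Rm + B^T *m P *m B) \in unitmx.
Proof.
move=> hP hR; apply: unitmx_of_qform_gt0 => z z0.
rewrite qformDl qform_mulmx ltr_wpDr //; [exact: hP.2 | exact: hR.2].
Qed.

Lemma riccati_sym (P S : 'M[R]_n) :
  P^T = P -> S^T = S -> Rm^T = Rm -> (riccati A B Rm P S)^T = riccati A B Rm P S.
Proof.
move=> sP sS sR.
have sGi : (invmx (Rm + B^T *m P *m B))^T = invmx (Rm + B^T *m P *m B).
  by rewrite trmx_inv linearD /= !trmx_mul trmxK sP sR mulmxA.
by rewrite /riccati linearD linearB /= sS !trmx_mul !trmxK sP sGi !mulmxA.
Qed.

Lemma qform_riccati (P S : 'M[R]_n) x : P^T = P ->
  let w := B^T *m P *m (A *m x) in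
  qform (riccati A B Rm P S) x =
  qform P (A *m x) - (w^T *m invmx (Rm + B^T *m P *m B) *m w) 0 0 + qform S x.
Proof.
move=> sP w; rewrite /riccati !qformDl qformN qform_mulmx.
by rewrite /qform /w !trmx_mul trmxK sP !mulmxA.
Qed.

Lemma riccati_ge (P S : 'M[R]_n) :
  psd P -> pd Rm -> forall x, qform S x <= qform (riccati A B Rm P S) x.
Proof.
move=> hP hR x; rewrite qform_riccati ?hP.1 //.
set w := B^T *m P *m (A *m x); set G := Rm + B^T *m P *m B.
have := qform_complete_square (A *m x) (- (invmx G *m w)) hP.1 hR.1
  (riccati_gain_unitmx hP hR) => /=.
rewrite -/w -/G addNr qform0 addr0 => <-.
by rewrite lerDr addr_ge0 //; [exact: hP.2 | exact: pd_qform_ge0].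
Qed.

(* Any feedback [u = K x] is no better than the optimal one. *)
Lemma riccati_le_feedback (P S : 'M[R]_n) (K : 'M[R]_(m, n)) :
  psd P -> pd Rm -> forall x,
  qform (riccati A B Rm P S) x <=
  qform P ((A + B *m K) *m x) + qform Rm (K *m x) + qform S x.
Proof.
move=> hP hR x; rewrite qform_riccati ?hP.1 // mulmxDl -(mulmxA B K x).
have := qform_complete_square (A *m x) (K *m x) hP.1 hR.1
  (riccati_gain_unitmx hP hR) => /= ->.
rewrite lerD2r lerDl.
by rewrite qformDl qform_mulmx addr_ge0 //; [exact: pd_qform_ge0 | exact: hP.2].
Qed.

End Riccati.

Lemma cauchy_schwarz_sum (R : realDomainType) n (f g : 'I_n -> R) :
  (\sum_i f i * g i) ^+ 2 <= (\sum_i f i ^+ 2) * (\sum_i g i ^+ 2).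
Proof.
have lagrange : \sum_i \sum_j (f i * g j - f j * g i) ^+ 2 =
    (\sum_i \sum_j f i ^+ 2 * g j ^+ 2) + (\sum_i \sum_j f j ^+ 2 * g i ^+ 2)
    - 2 * \sum_i \sum_j (f i * g i) * (f j * g j).
  rewrite mulr_sumr -big_split -sumrB /=; apply: eq_bigr => i _.
  rewrite mulr_sumr -big_split -sumrB /=; apply: eq_bigr => j _; ring.
have sq_ge0 : 0 <= \sum_i \sum_j (f i * g j - f j * g i) ^+ 2.
  by apply: sumr_ge0 => i _; apply: sumr_ge0 => j _; exact: sqr_ge0.
have swap : \sum_i \sum_j f j ^+ 2 * g i ^+ 2 = \sum_i \sum_j f i ^+ 2 * g j ^+ 2.
  exact: exchange_big.
have prod : (\sum_i f i ^+ 2) * (\sum_i g i ^+ 2) = \sum_i \sum_j f i ^+ 2 * g j ^+ 2.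
  by rewrite mulr_suml; apply: eq_bigr => i _; rewrite mulr_sumr.
have sq : (\sum_i f i * g i) ^+ 2 = \sum_i \sum_j (f i * g i) * (f j * g j).
  by rewrite expr2 mulr_suml; apply: eq_bigr => i _; rewrite mulr_sumr.
move: sq_ge0; rewrite prod sq lagrange swap; lra.
Qed.

Section EuclideanNorm.
Variable R : realType.

Lemma dot_ge0 n (x : 'cV[R]_n) : 0 <= dot x x.
Proof. by rewrite dotE; apply: sumr_ge0 => i _; rewrite -expr2 sqr_ge0. Qed.

Lemma dot_eq0 n (x : 'cV[R]_n) : (dot x x == 0) = (x == 0).
Proof.
apply/eqP/eqP => [|->]; last by rewrite /dot mulmx0 mxE.
rewrite dotE => /eqP; rewrite psumr_eq0 => [/allP x0|i _]; last first.
  by rewrite -expr2 sqr_ge0.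
apply/matrixP => i j; rewrite ord1 mxE.
by have /implyP/(_ isT) := x0 i (mem_index_enum _); rewrite mulf_eq0 orbb => /eqP.
Qed.

Lemma dot_cauchy_schwarz n (x y : 'cV[R]_n) : dot x y ^+ 2 <= dot x x * dot y y.
Proof.
rewrite !dotE; have := cauchy_schwarz_sum (fun i => x i 0) (fun i => y i 0).
have sq (z : 'cV[R]_n) : \sum_i z i 0 ^+ 2 = \sum_i z i 0 * z i 0.
  by apply: eq_bigr => i _; rewrite expr2.
by rewrite !sq.
Qed.

Lemma dotZ n (k : R) (x : 'cV[R]_n) : dot (k *: x) (k *: x) = k ^+ 2 * dot x x.
Proof. by rewrite !dotE mulr_sumr; apply: eq_bigr => i _; rewrite !mxE; ring. Qed.

Lemma spec_norm_ge_unit n (M : 'M[R]_n) x : dot x x = 1 ->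
  Num.sqrt (dot (M *m x) (M *m x)) <= spec_norm M.
Proof.
move=> x1; apply: ub_le_sup; last by exists x.
exists (Num.sqrt (\sum_i \sum_j M i j ^+ 2)) => _ [u /= u1 <-].
apply: ler_wsqrtr; rewrite -/(dot _ _) dotE; apply: ler_sum => i _.
rewrite -expr2 mxE; apply: le_trans (cauchy_schwarz_sum _ _) _.
suff -> : \sum_j u j 0 ^+ 2 = 1 by rewrite mulr1.
by rewrite -u1 -/(dot u u) dotE; apply: eq_bigr => j _; rewrite expr2.
Qed.

Lemma spec_norm_ge0 n (M : 'M[R]_n.+1) : 0 <= spec_norm M.
Proof.
pose e : 'cV[R]_n.+1 := delta_mx 0 0.
have e1 : dot e e = 1 by rewrite /dot trmx_delta -rowE !mxE.
exact: le_trans (sqrtr_ge0 _) (spec_norm_ge_unit M e1).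
Qed.

Lemma spec_norm_mulmx n (M : 'M[R]_n.+1) (x : 'cV[R]_n.+1) :
  dot (M *m x) (M *m x) <= spec_norm M ^+ 2 * dot x x.
Proof.
have [->|x0] := eqVneq x 0; first by rewrite mulmx0 /dot mulmx0 mxE mulr0.
have xx_gt0 : 0 < dot x x by rewrite lt_def dot_eq0 x0 dot_ge0.
pose k := (Num.sqrt (dot x x))^-1.
have k2 : k ^+ 2 = (dot x x)^-1 by rewrite /k exprVn sqr_sqrtr // ltW.
have u1 : dot (k *: x) (k *: x) = 1 by rewrite dotZ k2 mulVf // gt_eqF.
have := spec_norm_ge_unit M u1; rewrite -scalemxAr dotZ k2 => h.
rewrite -ler_pdivrMr // mulrC -[leLHS]sqr_sqrtr; last first.
  by rewrite mulr_ge0 ?invr_ge0 ?dot_ge0.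
by rewrite lerXn2r // ?nnegrE ?sqrtr_ge0 ?spec_norm_ge0.
Qed.

Lemma qform_le_spec_norm n (M : 'M[R]_n.+1) x :
  `|qform M x| <= spec_norm M * dot x x.
Proof.
have -> : qform M x = dot x (M *m x) by rewrite /qform /dot mulmxA.
have := dot_cauchy_schwarz x (M *m x); have := spec_norm_mulmx M x.
have := spec_norm_ge0 M; have := dot_ge0 x; have := dot_ge0 (M *m x).
set b := dot x (M *m x); set a := dot x x; set c := dot (M *m x) _.
set s := spec_norm M => c0 a0 s0 h2 h1.
have sa0 : 0 <= s * a by rewrite mulr_ge0.
have sq_le : b ^+ 2 <= (s * a) ^+ 2.
  have -> : (s * a) ^+ 2 = a * (s ^+ 2 * a) by ring.
  exact: le_trans h1 (ler_wpM2l a0 h2).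
by rewrite -(ger0_norm sa0) -ler_sqr ?nnegrE // real_normK ?num_real // ger0_norm.
Qed.

End EuclideanNorm.

Section LambdaMin.
Variable R : realType.
Local Open Scope sesquilinear_scope.
Local Notation toC := (real_complex R).

Lemma pd_eigenvalue_gt0 n (S : 'M[R]_n) a : pd S -> eigenvalue S a -> 0 < a.
Proof.
move=> hS /eigenvalueP [v vS v0].
have := hS.2 v^T; rewrite trmx_eq0 v0 trmxK vS -scalemxAl mxE => /(_ isT).
have : 0 <= (v *m v^T) 0 0.
  by rewrite mxE; apply: sumr_ge0 => i _; rewrite mxE -expr2 sqr_ge0.
by set t := (v *m v^T) 0 0; nra.
Qed.

Lemma lambda_min_le_eigenvalue n (S : 'M[R]_n) a :
  pd S -> eigenvalue S a -> lambda_min S <= a.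
Proof.
move=> hS Sa; apply: ge_inf => //.
by exists 0 => b /= Sb; exact/ltW/(pd_eigenvalue_gt0 hS Sb).
Qed.

Lemma conj_map_real m n (M : 'M[R]_(m, n)) :
  map_mx Num.conj (map_mx toC M) = map_mx toC M.
Proof. by apply/matrixP => i j; rewrite !mxE conj_Creal // complex_real. Qed.

Lemma spectral_diag_eigenvalue (C : numClosedFieldType) n (A : 'M[C]_n) :
  A \is normalmx -> forall i, eigenvalue A (spectral_diag A 0 i).
Proof.
move=> A_normal i; set U := spectralmx A.
have U_unitary : U \is unitarymx := spectral_unitarymx A.
apply/eigenvalueP; exists (row i U).
  rewrite -row_mul {1}(orthomx_spectralP A_normal) !mulmxA mulmxV ?spectral_unit //.
  by rewrite mul1mx mul_diag_mx; apply/rowP => j; rewrite !mxE.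
apply: contraTneq isT => Ui0.
have : row i (U *m U^t*) = 'e_i by move/unitarymxP: U_unitary => ->; rewrite row1.
rewrite row_mul Ui0 mul0mx => /rowP /(_ i); rewrite !mxE eqxx /= eqxx.
by move=> /eqP; rewrite eq_sym oner_eq0.
Qed.

(* Diagonalise the complexification of [S] by a unitary [U]: the diagonal
   entries are real eigenvalues of [S], hence at least [lambda_min S]. *)
Lemma lambda_min_qform n (S : 'M[R]_n) :
  pd S -> forall x, lambda_min S * dot x x <= qform S x.
Proof.
move=> hS x.
pose Sc := map_mx toC S.
have Sc_herm : Sc^t* = Sc by rewrite map_trmx hS.1 conj_map_real.
pose U := spectralmx Sc; pose d := spectral_diag Sc.
have Sc_normal : Sc \is normalmx by apply/normalmxP; rewrite Sc_herm.
have Sc_diag : Sc = invmx U *m diag_mx d *m U := orthomx_spectralP Sc_normal.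
have Uu : U \is unitarymx := spectral_unitarymx Sc.
have Ui : invmx U = U^t* := invmx_unitary Uu.
have d_realmx : d \is a realmx.
  apply: hermitian_spectral_diag_real; apply: realsym_hermsym.
    by apply/is_hermitianmxP; rewrite expr0 scale1r map_mx_id // map_trmx hS.1.
  by apply/mxOverP => k l; rewrite mxE complex_real.
have d_real i : toC (complex.Re (d 0 i)) = d 0 i.
  by apply: RRe_real; exact: (mxOverP d_realmx).
have d_ge i : lambda_min S <= complex.Re (d 0 i).
  apply: lambda_min_le_eigenvalue => //.
  have := spectral_diag_eigenvalue Sc_normal i.
  by rewrite !eigenvalue_root_char -d_real /Sc -map_char_poly fmorph_root.
have toC_entry (M : 'M[R]_1) : toC (M 0 0) = (map_mx toC M) 0 0 by rewrite mxE.
pose y := U *m map_mx toC x.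
have xU : (map_mx toC x)^T *m U^t* = y^t*.
  by rewrite /y trmx_mul map_mxM map_trmx conj_map_real.
have qS : toC (qform S x) = (y^t* *m diag_mx d *m y) 0 0.
  rewrite /qform toC_entry !map_mxM -/Sc -map_trmx.
  by rewrite Sc_diag Ui !mulmxA xU -!mulmxA.
have qI : toC (dot x x) = (y^t* *m y) 0 0.
  rewrite /dot toC_entry map_mxM -map_trmx -xU /y.
  by rewrite mulmxA -(mulmxA _ _ U) -Ui mulVmx ?spectral_unit // mulmx1.
clearbody y; rewrite -lecR -/toC rmorphM /= qS qI mul_mx_diag !mxE mulr_sumr.
apply: ler_sum => i _; rewrite !mxE -d_real.
have -> : (y i 0)^* * toC (complex.Re (d 0 i)) * y i 0 =
  toC (complex.Re (d 0 i)) * ((y i 0)^* * y i 0) by ring.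
by rewrite ler_wpM2r ?lecR // mulrC mul_conjC_ge0.
Qed.

End LambdaMin.

Lemma sum_le_of_contraction (R : realFieldType) (r c : R) (a b : nat -> R) :
  0 <= r < 1 -> (forall k, 0 <= a k) -> (forall k, a k.+1 <= r * a k + b k) ->
  (forall K, \sum_(k < K) b k <= c) ->
  forall K, \sum_(k < K) a k <= (a 0%N + c) / (1 - r).
Proof.
move=> /andP[r0 r1] a0 ab bc [|K].
  have c0 : 0 <= c by have := bc 0%N; rewrite big_ord0.
  by rewrite big_ord0; apply: divr_ge0; [exact: addr_ge0 | rewrite subr_ge0 ltW].
rewrite ler_pdivlMr ?subr_gt0 // big_ord_recl /=.
have step : \sum_(k < K) a (bump 0 k) <= r * \sum_(k < K) a k + c.
  apply: le_trans (_ : \sum_(k < K) (r * a k + b k) <= _); first exact: ler_sum.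
  by rewrite big_split /= -mulr_sumr lerD2l bc.
have mono : r * \sum_(k < K) a k <= r * \sum_(k < K.+1) a k.
  by rewrite ler_wpM2l // big_ord_recr lerDl.
move: step mono; rewrite big_ord_recl /=.
set T := \sum_(k < K) a (bump 0 k); set S := \sum_(k < K) a k => step mono.
nra.
Qed.

Section SchurStability.
Local Notation nc := Normc.normc.
Local Open Scope complex_scope.

Lemma normc_ge0 (R : rcfType) (x : R[i]) : 0 <= nc x.
Proof. by case: x => a b; rewrite /Normc.normc sqrtr_ge0. Qed.

(* Peel off one factor [M - z] at a time: the recursion
   [M^(k+1) X = z M^k X + M^k (M - z) X] is a contraction since [|z| < 1]. *)
Lemma stable_annihilator_pow_summable (R : rcfType) n (M : 'M[R[i]]_n)
    (zs : seq R[i]) : (forall z, z \in zs -> nc z < 1) ->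
  forall p (X : 'M[R[i]]_(n, p)), (\prod_(z <- zs) (M - z%:M)) *m X = 0 ->
  forall i j, exists c : R, forall K, \sum_(k < K) nc ((M ^+ k *m X) i j) <= c.
Proof.
elim/last_ind: zs => [_ p X|zs z IH zs_stable p X].
  rewrite big_nil mul1mx => -> i j; exists 0 => K.
  by rewrite big1 // => k _; rewrite mulmx0 mxE /Normc.normc /= expr0n addr0 sqrtr0.
rewrite big_rcons /= -mulmxE -mulmxA => annihil i j.
have [c hc] : exists c : R, forall K,
    \sum_(k < K) nc ((M ^+ k *m ((M - z%:M) *m X)) i j) <= c.
  by apply: IH annihil i j => w w_zs; apply: zs_stable; rewrite mem_rcons inE w_zs orbT.
have z_lt1 : nc z < 1 by apply: zs_stable; rewrite mem_rcons mem_head.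
exists ((nc ((M ^+ 0 *m X) i j) + c) / (1 - nc z)).
pose a k := nc ((M ^+ k *m X) i j).
pose b k := nc ((M ^+ k *m ((M - z%:M) *m X)) i j).
apply: (@sum_le_of_contraction _ _ _ a b) hc; first by rewrite normc_ge0.
  by move=> k; exact: normc_ge0.
move=> k; rewrite -Normc.normcM /a; apply: le_trans (le_normcD _ _).
suff -> : (M ^+ k.+1 *m X) i j =
    z * (M ^+ k *m X) i j + (M ^+ k *m ((M - z%:M) *m X)) i j.
  exact: lexx.
rewrite mulmxA mulmxBr mul_mx_scalar mulmxBl -scalemxAl !mxE exprSr mulmxE; ring.
Qed.

Lemma normc_real (R : rcfType) (r : R) : nc r%:C = `|r|.
Proof. by rewrite /Normc.normc /= expr0n addr0 sqrtr_sqr. Qed.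

Lemma schur_stable_pow_summable (R : realType) n (N : 'M[R]_n.+1) :
  schur_stable N -> exists C : R, forall i j J, \sum_(k < J) `|(N ^+ k) i j| <= C.
Proof.
move=> N_stable; pose toC := real_complex R; pose Nc := map_mx toC N.
have [rs char_Nc] := closed_field_poly_normal (char_poly Nc).
rewrite (monicP (char_poly_monic Nc)) scale1r in char_Nc.
have rs_stable z : z \in rs -> nc z < 1.
  move=> z_rs; have := N_stable z.
  rewrite (map_char_poly toC) -/Nc char_Nc root_prod_XsubC => /(_ z_rs).
  by case: z {z_rs} => a b; rewrite normc_def ltcR.
have annihil : (\prod_(z <- rs) (Nc - z%:M)) *m 1%:M = 0.
  rewrite mulmx1 -(Cayley_Hamilton Nc) char_Nc rmorph_prod /=.
  by apply: eq_bigr => z _; rewrite rmorphB /= horner_mx_X horner_mx_C.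
have entry_bound (ij : 'I_n.+1 * 'I_n.+1) : exists c : R,
    forall J, \sum_(k < J) `|(N ^+ k) ij.1 ij.2| <= c.
  have [c hc] := stable_annihilator_pow_summable rs_stable annihil ij.1 ij.2.
  have nc_entry k : nc ((Nc ^+ k *m 1%:M) ij.1 ij.2) = `|(N ^+ k) ij.1 ij.2|.
    by rewrite mulmx1 /Nc -rmorphXn mxE normc_real.
  by exists c => J; under eq_bigr do rewrite -nc_entry; exact: hc.
have [c hc] := fin_all_exists entry_bound.
have c_ge0 ij : 0 <= c ij by apply: le_trans (hc ij 0%N); rewrite big_ord0.
exists (\sum_ij c ij) => i j J; apply: le_trans (hc (i, j) J) _.
by rewrite (bigD1 (i, j)) //= lerDl sumr_ge0.
Qed.

End SchurStability.

Section EntryBounds.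
Variable R : realType.

Lemma psd_entry_le n (P : 'M[R]_n) W :
  psd P -> (forall a, P a a <= W) -> forall a b, `|P a b| <= W.
Proof.
move=> hP hW a b.
pose ea : 'cV[R]_n := delta_mx a 0; pose eb : 'cV[R]_n := delta_mx b 0.
have Pba : P b a = P a b by rewrite -[in LHS]hP.1 mxE.
have := hP.2 (ea + eb); have := hP.2 (ea - eb).
have oppE (M : 'M[R]_1) : (- M) 0 0 = - M 0 0 by rewrite mxE.
rewrite -!/(qform _ _) !qformDr /qform [(- eb)^T]raddfN /= !mulNmx !mulmxN !oppE.
rewrite opprK !bilin_delta Pba.
have := hW a; have := hW b; rewrite ler_norml => *; apply/andP; split; lra.
Qed.

Lemma sum_qform_le n (M : 'M[R]_n) (y : nat -> 'cV[R]_n) C :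
  (forall a J, \sum_(j < J) `|y j a 0| <= C) ->
  forall J, \sum_(j < J) `|qform M (y j)| <= (\sum_a \sum_b `|M a b|) * C * C.
Proof.
move=> hy J.
have y_le j b : `|y j b 0| <= C.
  apply: le_trans (hy b j.+1); rewrite big_ord_recr /= lerDr.
  by apply: sumr_ge0 => k _.
have C_ge0 (a : 'I_n) : 0 <= C := le_trans (normr_ge0 _) (y_le 0%N a).
apply: (@le_trans _ _ (\sum_(j < J) \sum_a \sum_b `|M a b| * C * `|y j a 0|)).
  apply: ler_sum => j _; rewrite qformE; apply: le_trans (ler_norm_sum _ _ _) _.
  apply: ler_sum => a _; apply: le_trans (ler_norm_sum _ _ _) _.
  apply: ler_sum => b _; rewrite !normrM [`|y j a 0| * _]mulrC [leRHS]mulrAC.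
  by apply: ler_wpM2l; [exact: mulr_ge0 | exact: y_le].
have -> : (\sum_a \sum_b `|M a b|) * C * C = \sum_a \sum_b `|M a b| * C * C.
  rewrite -mulrA mulr_suml; apply: eq_bigr => a _.
  by rewrite mulr_suml; apply: eq_bigr => b _; rewrite mulrA.
rewrite exchange_big; apply: ler_sum => a _.
rewrite exchange_big; apply: ler_sum => b _.
by rewrite -mulr_sumr ler_wpM2l ?mulr_ge0 ?(C_ge0 a).
Qed.

End EntryBounds.

Lemma vec_mx_continuous (R : realType) m n : continuous (@vec_mx R m n).
Proof.
have vec_mxE (v : 'rV[R]_(m * n)) i j : vec_mx v i j = v 0 (mxvec_index i j).
  by rewrite -[in RHS](vec_mxK v) mxvecE.
move=> v; apply/(@cvg_ballP _ _ _ _ (nbhs_filter v)) => e e0.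
have := @nbhsx_ballx _ _ v _ e0; apply: filterS => u [_ h].
by split => // i j; rewrite !vec_mxE; exact: h.
Qed.

Lemma compact_mx_box (R : realType) m n (c : R) :
  compact [set M : 'M[R]_(m, n) | forall i j, `|M i j| <= c].
Proof.
pose V := [set v : 'rV[R]_(m * n) | forall k, `[(- c), c]%classic (v 0 k)].
have V_compact : compact V.
  apply: (@rV_compact _ _ (fun=> `[(- c), c]%classic)) => _.
  exact: segment_compact.
have box_closed : closed [set M : 'M[R]_(m, n) | forall i j, `|M i j| <= c].
  rewrite (_ : [set _ | _] = \bigcap_(ij in [set: 'I_m * 'I_n])
      ((fun M : 'M[R]_(m, n) => `|M ij.1 ij.2|) @^-1` [set x : R | x <= c])).
    apply: closed_bigI => ij _; apply: preimage_closed; last exact: closed_le.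
    move=> M _; apply: continuous_comp; first exact: coord_continuous.
    exact: norm_continuous.
  apply/seteqP; split=> M /= hM; first by move=> [i j] _; exact: hM.
  by move=> i j; exact: (hM (i, j)).
apply: subclosed_compact box_closed (continuous_compact _ V_compact) _.
  by apply: continuous_subspaceT => v; exact: vec_mx_continuous.
move=> M hM; exists (mxvec M); last exact: mxvecK.
move=> k; rewrite /= in_itv /= -ler_norml.
by case: (mxvec_indexP k) => i j; rewrite mxvecE; exact: hM.
Qed.

Lemma compact_closure_entry_bounded (R : realType) m n (X : set 'M[R]_(m, n))
    (c : R) :
  (forall M, X M -> forall i j, `|M i j| <= c) -> compact (closure X).
Proof.
move=> X_le; have box_compact := @compact_mx_box R m n c.
apply: (subclosed_compact _ box_compact); first exact: closed_closure.
rewrite [X in _ `<=` X](closure_id _).1; first exact: closureS.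
exact: compact_closed box_compact.
Qed.

Section InexactValueIteration.
Variables (R : realType) (n m : nat).
Variables (A : 'M[R]_n.+1) (B : 'M[R]_(n.+1, m)) (S : 'M[R]_n.+1) (Rm : 'M[R]_m).
Variable P0 : 'M[R]_n.+1.
Hypotheses (hS : pd S) (hR : pd Rm) (hP0 : psd P0).

Section AdmissibleDisturbance.
Variables (Delta : nat -> 'M[R]_n.+1) (c : R).
Hypotheses (Delta_sym : forall k, Defs.symmetric (Delta k)) (c_lt : c < lambda_min S).
Hypothesis Delta_le : forall k, spec_norm (Delta k) <= c.

Local Notation P := (inexact_vi A B Rm S P0 Delta).

Lemma qform_disturbance_le k x : `|qform (Delta k) x| <= lambda_min S * dot x x.
Proof.
apply: le_trans (qform_le_spec_norm _ _) _.
by rewrite ler_wpM2r ?dot_ge0 // (le_trans (Delta_le k)) ?ltW.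
Qed.

Lemma inexact_vi_psd i : psd (P i).
Proof.
elim: i => [|i [P_sym P_ge0]] //=; split.
  rewrite /Defs.symmetric linearD /= riccati_sym ?Delta_sym //.
    exact: hS.1.
  exact: hR.1.
move=> x; rewrite -/(qform _ _) qformDl.
have := riccati_ge A B S (conj P_sym P_ge0) hR x.
have := lambda_min_qform hS x; have := qform_disturbance_le i x.
rewrite ler_norml => /andP[Delta_ge _]; lra.
Qed.

Lemma inexact_vi_le_feedback (K : 'M[R]_(m, n.+1)) :
  let N := A + B *m K in let Q := K^T *m Rm *m K + S + (lambda_min S)%:M in
  forall i x,
  qform (P i) x <= qform P0 (N ^+ i *m x) + \sum_(j < i) qform Q (N ^+ j *m x).
Proof.
move=> N Q; elim=> [|i IH] x; first by rewrite big_ord0 expr0 mul1mx addr0.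
have step : qform (P i.+1) x <= qform (P i) (N *m x) + qform Q x.
  rewrite /= (qformDl (riccati _ _ _ _ _)) !(qformDl (K^T *m Rm *m K + S)).
  rewrite (qformDl (K^T *m Rm *m K)) qform_mulmx qform_scalar.
  have := riccati_le_feedback A B S K (inexact_vi_psd i) hR x.
  have := qform_disturbance_le i x; rewrite ler_norml => /andP[_ Delta_le'].
  rewrite -/N; lra.
apply: le_trans step _; apply: le_trans (lerD (IH (N *m x)) (lexx _)) _.
rewrite big_ord_recl /= expr0 mul1mx.
have pow_shift j : N ^+ j *m (N *m x) = N ^+ j.+1 *m x.
  by rewrite mulmxA mulmxE -exprSr.
rewrite pow_shift; under eq_bigr do rewrite pow_shift.
rewrite /bump /=; lra.
Qed.

End AdmissibleDisturbance.

Lemma reach_set_entry_bounded : stabilizable A B ->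
  exists W, forall M, reach_set A B Rm S P0 M -> forall i j, `|M i j| <= W.
Proof.
case=> K; set N := A + B *m K => /schur_stable_pow_summable [C N_sum].
set Q := K^T *m Rm *m K + S + (lambda_min S)%:M.
have col_sum a k J : \sum_(j < J) `|col a (N ^+ j) k 0| <= C.
  by under eq_bigr do rewrite mxE; exact: N_sum.
exists ((\sum_a \sum_b `|P0 a b|) * C * C + (\sum_a \sum_b `|Q a b|) * C * C).
move=> _ [Delta [i [Delta_sym [[c [c_lt Delta_le]] ->]]]].
apply: psd_entry_le; first exact: inexact_vi_psd Delta_sym c_lt Delta_le i.
move=> a; rewrite -qform_delta.
apply: le_trans (inexact_vi_le_feedback Delta_sym c_lt Delta_le K i _) _.
rewrite -/N -/Q -colE; under eq_bigr do rewrite -colE.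
pose y j := col a (N ^+ j).
have := sum_qform_le P0 (y := y) (col_sum a) i.+1; rewrite big_ord_recr /= => P0_le.
have Q_le := sum_qform_le Q (y := y) (col_sum a) i.
apply: lerD.
  apply: le_trans (ler_norm _) (le_trans _ P0_le).
  by rewrite lerDr; apply: sumr_ge0.
exact: le_trans (ler_sum _ (fun j _ => ler_norm _)) Q_le.
Qed.

End InexactValueIteration.

Theorem corollary1 (R : realType) (n m : nat) (hn : (0 < n)%N) (hm : (0 < m)%N)
  (A : 'M[R]_n) (B : 'M[R]_(n, m)) (S : 'M[R]_n) (Rm : 'M[R]_m)
  (hS : pd S) (hR : pd Rm) (hAB : stabilizable A B)
  (P0 : 'M[R]_n) (hP0 : psd P0) :
  compact (closure (reach_set A B Rm S P0)).
Proof.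
case: n hn A B S hS hAB P0 hP0 => [//|n] _ A B S hS hAB P0 hP0.
have [W reach_le] := reach_set_entry_bounded hS hR hP0 hAB.
exact: compact_closure_entry_bounded reach_le.
Qed.
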